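(* Let $\mathcal{G}_1$ be an $r_1$-regular graph on $n_1$ vertices and $\mathcal{G}_2$ an $r_2$-regular graph on $n_2$ vertices. Let $\nu_{11},\nu_{12},\ldots,\nu_{1n_1}$ be the signless Laplacian eigenvalues of $\mathcal{G}_1$. Then the signless Laplacian characteristic polynomial of $\mathcal{G}_1\circledast\mathcal{G}_2$ satisfies $$f(Q_{\mathcal{G}_1\circledast \mathcal{G}_2},x)=(x-r_1n_2-n_2)^{n_1(n_2-1)}\, f(Q_{\mathcal{G}_2},x-n_2)^{n_1}\cdot \prod_{i=1}^{n_1}\big[x-n_2-n_2\nu_{1i}-n_2\chi_{Q_{\mathcal{G}_2}}(x-n_2)\big].$$
   Context: All graphs are simple, finite and undirected. For a graph $\mathcal{G}$ with adjacency matrix $A_{\mathcal{G}}$ and diagonal degree matrix $D_{\mathcal{G}}$, the signless Laplacian matrix is $Q_{\mathcal{G}}=D_{\mathcal{G}}+A_{\mathcal{G}}$. For a square matrix $M$, $f(M,x)=\det(xI-M)$. The signless Laplacian coronal of a graph $\mathcal{G}$ on $n$ vertices is the rational function $\chi_{Q_{\mathcal{G}}}(x)=\mathbf{1}_n^T(xI_n-Q_{\mathcal{G}})^{-1}\mathbf{1}_n$, with $\mathbf{1}_n$ the all-ones column vector. The graph product $\mathcal{G}_1\circledast\mathcal{G}_2$ of $\mathcal{G}_1$ (vertices $u_1,\ldots,u_{n_1}$) and $\mathcal{G}_2$ (vertices $v_1,\ldots,v_{n_2}$) has vertex set $\{a_{ik},b_{ik}:1\le i\le n_1,1\le k\le n_2\}$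 and edges: (1) $a_{ik}a_{jl}$ for all $1\le k,l\le n_2$ whenever $u_iu_j\in E(\mathcal{G}_1)$; (2) $b_{ri}b_{rj}$ for all $1\le r\le n_1$ whenever $v_iv_j\in E(\mathcal{G}_2)$; (3) $a_{ip}b_{iq}$ for all $1\le i\le n_1$, $1\le p,q\le n_2$. The identity is one of rational functions in $x$. *)

From mathcomp Require Import all_boot all_order all_algebra.
Set Implicit Arguments. Unset Strict Implicit. Unset Printing Implicit Defensive.
Import Order.TTheory GRing.Theory Num.Theory.
Local Open Scope ring_scope.

Definition simple_graph (T : finType) (e : rel T) : Prop :=
  (forall x y, e x y = e y x) /\ (forall x, ~~ e x x).

Definition degree (T : finType) (e : rel T) (v : T) : nat := #|[pred w | e v w]|.

Definition regular (T : finType) (e : rel T) (r : nat) : Prop :=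
  forall v, degree e v = r.

Definition signless_lap (R : nzRingType) (T : finType) (e : rel T) : 'M[R]_#|T| :=
  \matrix_(i, j) ((i == j)%:R * (degree e (enum_val i))%:R
                  + (e (enum_val i) (enum_val j))%:R).

(* f(M, x) = det(xI - M) is char_poly M; signless Laplacian coronal chi_Q(x) =
   1^T (xI - Q)^{-1} 1, evaluated at a point x. *)
Definition coronal (R : fieldType) (n : nat) (Q : 'M[R]_n) (x : R) : R :=
  \sum_(i < n) \sum_(j < n) (invmx (x%:M - Q)) i j.

(* Vertex (true,(i,k)) is a_{ik}, vertex (false,(i,k)) is b_{ik}. *)
Definition prod_graph (n1 n2 : nat) (e1 : rel 'I_n1) (e2 : rel 'I_n2)
  : rel (bool * ('I_n1 * 'I_n2)) :=
  fun u v =>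
    match u, v with
    | (true, (i, _)), (true, (j, _)) => e1 i j
    | (false, (r, i)), (false, (s, j)) => (r == s) && e2 i j
    | (true, (i, _)), (false, (j, _)) => i == j
    | (false, (i, _)), (true, (j, _)) => i == j
    end.

From mathcomp Require Import all_boot all_order all_algebra perm mxtens.
From mathcomp Require Import ring.
Set Implicit Arguments. Unset Strict Implicit. Unset Printing Implicit Defensive.
Import Order.TTheory GRing.Theory Num.Theory.
Local Open Scope ring_scope.

(* List the vertices a_ik first and the b_ik second, each half in Kronecker
   order.  With J the all-ones n2 x n2 matrix, A1 the adjacency matrix of G1,
   B = (x - n2) I - Q2 and c = x - r1 n2 - n2, this gives
     x I - Q = [[c I - A1 (x) J, - I (x) J], [- I (x) J, I (x) B]].
   Since J B^-1 J = chi J with chi = 1^T B^-1 1, the Schur complement of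
   I (x) B is c I - (A1 + chi I) (x) J.  As J = 1 1^T has rank one, Sylvester's
   determinant identity turns its determinant into
   c^(n1 (n2 - 1)) det (c I - n2 (A1 + chi I)), and A1 = Q1 - r1 I makes the
   last determinant a product over the signless Laplacian eigenvalues of G1. *)

Lemma invmx_right_inverse (R : comUnitRingType) n (A B : 'M[R]_n) :
  A *m B = 1%:M -> invmx A = B.
Proof.
move=> AB1; have [A_unit _] := mulmx1_unit AB1.
by rewrite -[LHS]mulmx1 -AB1 mulmxA mulVmx // mul1mx.
Qed.

Section BijectiveReindex.
Variables (R : comUnitRingType) (m n : nat) (h : 'I_m -> 'I_n).
Hypothesis h_bij : bijective h.

Lemma mxsub_bijM (A B : 'M[R]_n) : mxsub h h (A *m B) = mxsub h h A *m mxsub h h B.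
Proof.
apply/matrixP => i j; rewrite mxsub_mul !mxE.
rewrite (reindex h) /=; last by apply: onW_bij.
by apply: eq_bigr => k _; rewrite !mxE.
Qed.

Lemma mxsub_bij_scalar (a : R) : mxsub h h a%:M = a%:M.
Proof. by apply/matrixP => i j; rewrite !mxE (bij_eq h_bij). Qed.

Lemma mxsub_bij_subr (a : R) (A : 'M[R]_n) : mxsub h h (a%:M - A) = a%:M - mxsub h h A.
Proof. by rewrite -mxsub_bij_scalar; apply/matrixP => i j; rewrite !mxE. Qed.

Lemma det_mxsub_bij (A : 'M[R]_n) : \det (mxsub h h A) = \det A.
Proof.
have e := bij_eq_card h_bij; rewrite !card_ord in e; subst m.
pose s := perm (bij_inj h_bij).
have -> : mxsub h h A = row_perm s (col_perm s A).
  by apply/matrixP => i j; rewrite !mxE !permE.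
rewrite row_permE col_permE !det_mulmx !det_perm odd_permV mulrCA.
by rewrite -signr_addb addbb mulr1.
Qed.

Lemma mxsub_bij_invmx (A : 'M[R]_n) : invmx (mxsub h h A) = mxsub h h (invmx A).
Proof.
have [A_unit | A_nunit] := boolP (A \in unitmx); last first.
  rewrite (invmx_out A_nunit) invmx_out // inE unitmxE det_mxsub_bij.
  by rewrite -unitmxE.
by apply: invmx_right_inverse; rewrite -mxsub_bijM mulmxV // mxsub_bij_scalar.
Qed.

Lemma sum_mxsub_bij (A : 'M[R]_n) :
  \sum_i \sum_j mxsub h h A i j = \sum_i \sum_j A i j.
Proof.
rewrite (reindex h) /=; last by apply: onW_bij.
apply: eq_bigr => i _; rewrite (reindex h) /=; last by apply: onW_bij.
by apply: eq_bigr => j _; rewrite mxE.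
Qed.

End BijectiveReindex.

Lemma horner_char_poly (R : comNzRingType) n (A : 'M[R]_n) (x : R) :
  (char_poly A).[x] = \det (x%:M - A).
Proof.
rewrite /char_poly -horner_evalE -det_map_mx; congr (\det _).
apply/matrixP => i j; rewrite !mxE /= horner_evalE.
by rewrite hornerD hornerN hornerMn hornerX hornerC.
Qed.

Lemma det_block_schur (R : comUnitRingType) m n (A : 'M[R]_m) (B : 'M[R]_(m, n))
    (C : 'M[R]_(n, m)) (D : 'M[R]_n) :
  D \in unitmx ->
  \det (block_mx A B C D) = \det (A - B *m invmx D *m C) * \det D.
Proof.
move=> D_unit.
have elim_C : block_mx A B C D *m block_mx 1%:M 0 (- (invmx D *m C)) 1%:M =
              block_mx (A - B *m invmx D *m C) B 0 D.
  by rewrite mulmx_block !mulmx1 !mulmx0 !add0r !mulmxN !mulmxA mulmxV // mul1mx subrr.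
by rewrite -(det_ublock _ B) -elim_C det_mulmx det_lblock !det_scalar !expr1n !mulr1.
Qed.

Lemma det_sylvester (R : comNzRingType) m n (A : 'M[R]_(m, n)) (B : 'M[R]_(n, m))
    (c : R) :
  c ^+ m * \det (c%:M - B *m A) = c ^+ n * \det (c%:M - A *m B).
Proof.
have left_elim : block_mx c%:M A B 1%:M =
    block_mx (c%:M - A *m B) A 0 1%:M *m block_mx 1%:M 0 B 1%:M.
  by rewrite mulmx_block !(mulmx1, mul1mx, mulmx0, mul0mx, addr0, add0r) subrK.
have right_elim : block_mx 1%:M A B c%:M =
    block_mx 1%:M 0 B 1%:M *m block_mx 1%:M A 0 (c%:M - B *m A).
  by rewrite mulmx_block !(mulmx1, mul1mx, mulmx0, mul0mx, addr0, add0r) addrC subrK.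
have scale_swap : block_mx c%:M 0 0 1%:M *m block_mx 1%:M A B c%:M =
                  block_mx c%:M A B 1%:M *m block_mx 1%:M 0 0 c%:M.
  rewrite !mulmx_block !(mulmx1, mul1mx, mulmx0, mul0mx, addr0, add0r).
  by rewrite mul_mx_scalar mul_scalar_mx.
have := congr1 determinant scale_swap.
rewrite !det_mulmx left_elim right_elim !det_mulmx.
rewrite !det_ublock !det_lblock !det_scalar !expr1n !mulr1 !mul1r.
by move=> ->; rewrite mulrC.
Qed.

Lemma det_sub_mulmxC (R : idomainType) m n (A : 'M[R]_(m, n)) (B : 'M[R]_(n, m))
    (c : R) :
  (n <= m)%N -> \det (c%:M - A *m B) = c ^+ (m - n) * \det (c%:M - B *m A).
Proof.
move=> le_nm.
have char_polyM : 'X ^+ n * char_poly (A *m B) = 'X ^+ m * char_poly (B *m A).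
  by rewrite /char_poly /char_poly_mx !map_mxM -det_sylvester.
(* Cancelling 'X ^+ n in {poly R}, not c ^+ n in R, keeps the case c = 0. *)
rewrite -[in 'X ^+ m](subnKC le_nm) exprD -mulrA in char_polyM.
have := congr1 (horner^~ c) (mulfI (expf_neq0 _ (negbT (polyX_eq0 R))) char_polyM).
by rewrite /= hornerM hornerXn !horner_char_poly.
Qed.

Lemma det_castmx (R : comNzRingType) n p (e : n = p) (A : 'M[R]_n) :
  \det (castmx (e, e) A) = \det A.
Proof. by case: p / e; rewrite castmx_id. Qed.

Lemma det_sub_castmx (R : comNzRingType) n p (e : n = p) (c : R) (A : 'M[R]_n) :
  \det (c%:M - castmx (e, e) A) = \det (c%:M - A).
Proof. by case: p / e; rewrite castmx_id. Qed.

Lemma mxtens_index_eq m n (i j : 'I_m) (k l : 'I_n) :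
  (mxtens_index (i, k) == mxtens_index (j, l)) = (i == j) && (k == l).
Proof. by rewrite (can_eq (@mxtens_indexK m n)) xpair_eqE. Qed.

Lemma tens1mx_scalar (R : comNzRingType) n m (a : R) :
  (1%:M : 'M[R]_n) *t (a%:M : 'M[R]_m) = a%:M.
Proof.
apply/matrixP => u v.
case: (mxtens_indexP u) => i k; case: (mxtens_indexP v) => j l.
by rewrite tensmxE !mxE mxtens_index_eq mulr_natl -mulrnA mulnb andbC.
Qed.

Lemma det_tens1mx (R : comNzRingType) n m (B : 'M[R]_m) :
  \det ((1%:M : 'M[R]_n) *t B) = \det B ^+ n.
Proof.
elim: n => [|n IHn]; first by rewrite det_mx00.
rewrite [1%:M](@scalar_mx_block _ 1 n) tens_block_mx det_castmx !tens0mx.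
by rewrite det_ublock IHn tens_scalar_mx scale1r det_castmx exprS.
Qed.

Lemma invmx_tens1mx (R : comUnitRingType) n m (B : 'M[R]_m) :
  B \in unitmx -> invmx ((1%:M : 'M[R]_n) *t B) = 1%:M *t invmx B.
Proof.
move=> B_unit; apply: invmx_right_inverse.
by rewrite tensmx_mul mulmx1 mulmxV // tens1mx_scalar.
Qed.

Section TensorLinearity.
Variables (R : comNzRingType) (m n p q : nat).

Lemma tensmxDl (A B : 'M[R]_(m, n)) (C : 'M[R]_(p, q)) :
  (A + B) *t C = A *t C + B *t C.
Proof. by apply/matrixP => a b; rewrite !mxE mulrDl. Qed.

Lemma tensmxBr (A : 'M[R]_(m, n)) (B C : 'M[R]_(p, q)) :
  A *t (B - C) = A *t B - A *t C.
Proof. by apply/matrixP => a b; rewrite !mxE mulrBr. Qed.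

Lemma tens_scalar_mxl (a : R) (B : 'M[R]_(p, q)) :
  (a%:M : 'M[R]_m) *t B = 1%:M *t (a *: B).
Proof. by apply/matrixP => i j; rewrite !mxE mulrnAl mulr_natl. Qed.

End TensorLinearity.

Lemma const_mx1_mul (R : comNzRingType) m n p :
  (const_mx 1 : 'M[R]_(m, n)) *m (const_mx 1 : 'M[R]_(n, p)) = const_mx n%:R.
Proof.
apply/matrixP => i j; rewrite !mxE.
by under eq_bigr do rewrite !mxE mulr1; rewrite sumr_const card_ord.
Qed.

Lemma const_mx1_sandwich (R : comNzRingType) m n p q (M : 'M[R]_(m, n)) :
  (const_mx 1 : 'M[R]_(p, m)) *m M *m (const_mx 1 : 'M[R]_(n, q)) =
  (\sum_i \sum_j M i j) *: const_mx 1.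
Proof.
apply/matrixP => a b; rewrite !mxE mulr1 exchange_big /=; apply: eq_bigr => j _.
by rewrite !mxE mulr1; apply: eq_bigr => i _; rewrite !mxE mul1r.
Qed.

Section CoronaBlock.
Variables (R : idomainType) (n m : nat).
Local Notation J := (const_mx 1 : 'M[R]_m).

Lemma det_sub_tensJ (K : 'M[R]_n) (c : R) : (0 < m)%N ->
  \det (c%:M - K *t J) = c ^+ (n * (m - 1)) * \det (c%:M - m%:R *: K).
Proof.
move=> m_gt0.
have J_rank1 : K *t J =
    (K *t (const_mx 1 : 'M_(m, 1))) *m ((1%:M : 'M_n) *t (const_mx 1 : 'M_(1, m))).
  by rewrite tensmx_mul mulmx1 const_mx1_mul.
have le_n_nm : (n * 1 <= n * m)%N by rewrite leq_mul2l m_gt0 orbT.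
rewrite J_rank1 det_sub_mulmxC // tensmx_mul mul1mx const_mx1_mul.
by rewrite -mulnBr [const_mx _]mx11_scalar mxE tens_mx_scalar det_sub_castmx.
Qed.

Variables (A : 'M[R]_n) (Q : 'M[R]_m) (d x : R).
Let B := (x - m%:R)%:M - Q.
Let chi := \sum_i \sum_j invmx B i j.
Hypothesis B_unit : B \in unitmx.

Lemma det_schur_corona :
  \det (x%:M - block_mx (d%:M + A *t J) (1%:M *t J) (1%:M *t J)
                        (1%:M *t (Q + m%:R%:M))) =
  \det B ^+ n * \det ((x - d)%:M - (A + chi%:M) *t J).
Proof.
have lower_right : x%:M - (1%:M : 'M_n) *t (Q + m%:R%:M) = 1%:M *t B.
  rewrite -[x%:M](tens1mx_scalar n m) -tensmxBr /B; congr (_ *t _).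
  by rewrite raddfB opprD addrCA addrC.
have sandwich : (1%:M : 'M_n) *t J *m invmx (1%:M *t B) *m (1%:M *t J) = chi%:M *t J.
  by rewrite invmx_tens1mx // !tensmx_mul !mulmx1 const_mx1_sandwich -tens_scalar_mxl.
rewrite [x%:M](scalar_mx_block (n * m) (n * m)) opp_block_mx add_block_mx !sub0r.
rewrite lower_right det_block_schur; last first.
  by rewrite unitmxE det_tens1mx unitrX // -unitmxE.
rewrite det_tens1mx mulrC !(mulNmx, mulmxN, opprK) sandwich opprD addrA tensmxDl.
by rewrite opprD addrA raddfB.
Qed.

End CoronaBlock.

Lemma degreeE (T : finType) (e : rel T) (v : T) : degree e v = (\sum_w e v w)%N.
Proof.
rewrite /degree -sum1_card big_mkcond.
by apply: eq_bigr => w _; rewrite inE; case: (e v w).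
Qed.

Lemma sum_nat_delta n (i : 'I_n) (F : 'I_n -> nat) : (\sum_j (i == j) * F j)%N = F i.
Proof.
rewrite (bigD1 i) //= eqxx mul1n big1 ?addn0 // => j.
by rewrite eq_sym => /negbTE ->.
Qed.

Definition adjmx (R : nzRingType) n (e : rel 'I_n) : 'M[R]_n :=
  \matrix_(i, j) (e i j)%:R.

Lemma signless_lap_rank (R : nzRingType) (T : finType) (e : rel T) (u v : T) :
  signless_lap R e (enum_rank u) (enum_rank v) =
  (u == v)%:R * (degree e u)%:R + (e u v)%:R.
Proof. by rewrite mxE !enum_rankK (inj_eq enum_rank_inj). Qed.

(* signless_lap indexes a graph on 'I_n by 'I_#|'I_n|, which is not
   convertible to 'I_n; this is the same matrix reindexed by 'I_n itself. *)
Definition signless_lap_ord (R : nzRingType) n (e : rel 'I_n) : 'M[R]_n :=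
  mxsub enum_rank enum_rank (signless_lap R e).

Lemma signless_lap_ordE (R : nzRingType) n (e : rel 'I_n) i j :
  signless_lap_ord R e i j = (i == j)%:R * (degree e i)%:R + (e i j)%:R.
Proof. by rewrite mxE signless_lap_rank. Qed.

Lemma signless_lap_ord_regular (R : nzRingType) n (e : rel 'I_n) r :
  regular e r -> signless_lap_ord R e = r%:R%:M + adjmx R e.
Proof.
move=> e_reg; apply/matrixP => i j.
by rewrite signless_lap_ordE !mxE e_reg mulr_natl.
Qed.

Section OrdinalGraph.
Variables (R : fieldType) (n : nat) (e : rel 'I_n).

Lemma det_sub_signless_lap_ord (y : R) :
  \det (y%:M - signless_lap_ord R e) = (char_poly (signless_lap R e)).[y].
Proof.
have rank_bij := @enum_rank_bij 'I_n.
by rewrite horner_char_poly -mxsub_bij_subr // det_mxsub_bij.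
Qed.

Lemma unitmx_sub_signless_lap_ord (y : R) :
  (y%:M - signless_lap_ord R e \in unitmx) = (y%:M - signless_lap R e \in unitmx).
Proof. by rewrite !unitmxE det_sub_signless_lap_ord horner_char_poly. Qed.

Lemma coronal_signless_lap_ord (y : R) :
  coronal (signless_lap R e) y = \sum_i \sum_j invmx (y%:M - signless_lap_ord R e) i j.
Proof.
have rank_bij := @enum_rank_bij 'I_n.
by rewrite -mxsub_bij_subr // mxsub_bij_invmx // sum_mxsub_bij.
Qed.

Lemma det_sub_scaled_adjmx_regular r (nu : 'I_n -> R) (s t c : R) :
  regular e r -> char_poly (signless_lap R e) = \prod_i ('X - (nu i)%:P) -> s != 0 ->
  \det (c%:M - s *: (adjmx R e + t%:M)) = \prod_i (c + s * r%:R - s * t - s * nu i).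
Proof.
move=> e_reg char_e s_neq0; set y := c / s + r%:R - t.
have -> : c%:M - s *: (adjmx R e + t%:M) = s *: (y%:M - signless_lap_ord R e).
  apply/matrixP => i j; rewrite (signless_lap_ord_regular _ e_reg) !mxE /y.
  by case: (i == j); rewrite /= ?mulr1n ?mulr0n; field.
rewrite detZ det_sub_signless_lap_ord char_e horner_prod.
have -> : s ^+ n = \prod_(i < n) s by rewrite prodr_const card_ord.
rewrite -big_split /=; apply: eq_bigr => i _.
by rewrite hornerXsubC /y; field.
Qed.

End OrdinalGraph.

Section ProductGraph.
Variables (n1 n2 : nat) (e1 : rel 'I_n1) (e2 : rel 'I_n2).
Local Notation G := (prod_graph e1 e2).

Lemma sum_prod_vertex (F : bool * ('I_n1 * 'I_n2) -> nat) :
  (\sum_w F w = \sum_i \sum_k F (true, (i, k)) + \sum_i \sum_k F (false, (i, k)))%N.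
Proof.
transitivity (\sum_b \sum_p F (b, p))%N.
  by rewrite pair_bigA; apply: eq_bigr => -[].
by rewrite big_bool /= !pair_bigA; congr (_ + _)%N; apply: eq_bigr => -[].
Qed.

Lemma degree_prod_graph_a i k :
  degree G (true, (i, k)) = (degree e1 i * n2 + n2)%N.
Proof.
rewrite !degreeE sum_prod_vertex /=.
under eq_bigr do rewrite big_const_ord iter_addn_0.
under [X in (_ + X)%N]eq_bigr do rewrite big_const_ord iter_addn_0.
by rewrite -big_distrl /= (sum_nat_delta i (fun=> n2)).
Qed.

Lemma degree_prod_graph_b i k :
  degree G (false, (i, k)) = (degree e2 k + n2)%N.
Proof.
rewrite !degreeE sum_prod_vertex /= addnC.
under [X in (_ + X)%N]eq_bigr do rewrite big_const_ord iter_addn_0.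
rewrite (sum_nat_delta i (fun=> n2)); congr (_ + _)%N.
under eq_bigr do under eq_bigr do rewrite -mulnb.
by under eq_bigr do rewrite -big_distrr /=; rewrite sum_nat_delta.
Qed.

(* a_ik is tagged true and b_ik false; (i, k) sits at the Kronecker index
   i * n2 + k of its half. *)
Definition prod_vertex (a : 'I_(n1 * n2 + n1 * n2)) : bool * ('I_n1 * 'I_n2) :=
  match split a with
  | inl p => (true, mxtens_unindex p)
  | inr p => (false, mxtens_unindex p)
  end.

Lemma prod_vertex_lshift p : prod_vertex (lshift _ p) = (true, mxtens_unindex p).
Proof. by rewrite /prod_vertex (unsplitK (inl p)). Qed.

Lemma prod_vertex_rshift p : prod_vertex (rshift _ p) = (false, mxtens_unindex p).
Proof. by rewrite /prod_vertex (unsplitK (inr p)). Qed.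

Lemma prod_vertex_bij : bijective prod_vertex.
Proof.
exists (fun v =>
  if v.1 then lshift _ (mxtens_index v.2) else rshift _ (mxtens_index v.2)).
  move=> a; case: (split_ordP a) => p ->;
  by rewrite ?prod_vertex_lshift ?prod_vertex_rshift /= mxtens_unindexK.
by move=> [[] ik]; rewrite /= ?prod_vertex_lshift ?prod_vertex_rshift mxtens_indexK.
Qed.

Lemma signless_lap_prod_graph (R : nzRingType) r1 : regular e1 r1 ->
  mxsub (enum_rank \o prod_vertex) (enum_rank \o prod_vertex)
        (signless_lap R (prod_graph e1 e2)) =
  block_mx ((r1 * n2 + n2)%:R%:M + adjmx R e1 *t const_mx 1) (1%:M *t const_mx 1)
           (1%:M *t const_mx 1) (1%:M *t (signless_lap_ord R e2 + n2%:R%:M)).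
Proof.
move=> e1_reg; apply/matrixP => a b; rewrite mxE /=.
case: (split_ordP a) => p ->; case: (split_ordP b) => q ->;
case: (mxtens_indexP p) => i k; case: (mxtens_indexP q) => j l;
rewrite ?(block_mxEul, block_mxEur, block_mxEdl, block_mxEdr)
  ?(prod_vertex_lshift, prod_vertex_rshift) !mxtens_indexK signless_lap_rank
  ?tensmxE;
rewrite ?[in RHS]mxE ?tensmxE ?mxE ?mxtens_indexK ?degree_prod_graph_a
  ?degree_prod_graph_b ?e1_reg !xpair_eqE ?mxtens_index_eq ?enum_rankK
  ?(inj_eq enum_rank_inj) /=.
all: by case: (i == j); case: (k == l); rewrite /=
  ?(mul0r, mul1r, mulr0, mulr1, mulr1n, mulr0n, add0r, addr0, natrD) // addrAC.
Qed.

End ProductGraph.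

Theorem theorem2 (R : realFieldType) (n1 n2 r1 r2 : nat)
  (e1 : rel 'I_n1) (e2 : rel 'I_n2) (nu : 'I_n1 -> R) :
  (0 < n1)%N -> (0 < n2)%N ->
  simple_graph e1 -> simple_graph e2 ->
  regular e1 r1 -> regular e2 r2 ->
  char_poly (signless_lap R e1) = \prod_(i < n1) ('X - (nu i)%:P) ->
  forall x : R,
    (x - n2%:R)%:M - signless_lap R e2 \in unitmx ->
    (char_poly (signless_lap R (prod_graph e1 e2))).[x] =
      (x - (r1 * n2)%:R - n2%:R) ^+ (n1 * (n2 - 1))
      * ((char_poly (signless_lap R e2)).[x - n2%:R]) ^+ n1
      * \prod_(i < n1) (x - n2%:R - n2%:R * nu i
                        - n2%:R * coronal (signless_lap R e2) (x - n2%:R)).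
Proof.
move=> _ n2_gt0 _ _ e1_reg _ char_e1 x B_unit.
have vertex_bij : bijective (enum_rank \o @prod_vertex n1 n2).
  by apply: bij_comp; [apply: enum_rank_bij | apply: prod_vertex_bij].
have n2_neq0 : n2%:R != 0 :> R by rewrite pnatr_eq0 -lt0n.
rewrite horner_char_poly -(det_mxsub_bij vertex_bij) (mxsub_bij_subr vertex_bij).
rewrite (signless_lap_prod_graph _ _ e1_reg) det_schur_corona; last first.
  by rewrite unitmx_sub_signless_lap_ord.
rewrite det_sub_tensJ // (det_sub_scaled_adjmx_regular _ _ e1_reg char_e1 n2_neq0).
rewrite det_sub_signless_lap_ord -coronal_signless_lap_ord mulrCA mulrA.
rewrite natrD opprD addrA.
congr (_ * _); apply: eq_bigr => i _; rewrite natrM; ring.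
Qed.
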